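(* Partially synchronous Streamlet with $n$ validators provides $\frac{1}{3}$-accountable safety with respect to the Streamlet slashing conditions.
   Context: Streamlet: time is divided into epochs, each with a leader. The leader of epoch $e$ proposes a block extending one of the longest notarized chains it has seen; a validator votes (at most once per epoch) for the leader's proposal if it extends one of the longest notarized chains the validator has seen. A block is notarized once it has votes from at least $2n/3$ validators. If a notarized chain contains three adjacent blocks from consecutive epochs $e-1,e,e+1$, then the block of epoch $e$ and its prefix are finalized. For a block $B$, $e_B$ denotes its epoch and $|B|$ its depth. Streamlet slashing conditions: a validator violates a slashing condition if (1) it votes for two blocks $B_1,B_2$ with $e_{B_1}=e_{B_2}$, or (2) it votes for $B_1,B_2$ with $e_{B_1}<e_{B_2}$ but $|B_1|>|B_2|$. A protocol provides $\alpha$-accountable safety if (1) in the case of a safety violation of the produced ledger, at least $\alpha n$ validators can be irrefutably accused, in particular shown to have violated a slashing condition, and (2) honest validators never violate the slashing conditions. *)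

From mathcomp Require Import all_boot.
Set Implicit Arguments. Unset Strict Implicit. Unset Printing Implicit Defensive.

Section Streamlet.
Variable P : eqType.

(* A block is identified with the list of (epoch, payload) entries of the
   chain from (excluding) genesis up to it, oldest first.  The genesis block
   is the empty list and has epoch 0; every other block has epoch >= 1. *)
Definition block := {s : seq (nat * P) | all (fun x => 0 < x.1) s}.

Definition genesis (B : block) : bool := val B == [::].

Definition epoch (B : block) : nat := last 0 (map fst (val B)).

Definition depth (B : block) : nat := size (val B).

Definition ancestor (B1 B2 : block) : bool := prefix (val B1) (val B2).

Definition parent (Bp B : block) : Prop := exists x, val B = rcons (val Bp) x.

Definition conflicting (B1 B2 : block) : bool :=
  ~~ ancestor B1 B2 && ~~ ancestor B2 B1.

Variable n : nat.

Definition votes := 'I_n -> block -> bool.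

Definition voters (V : votes) (B : block) : {set 'I_n} := [set i | V i B].

Definition notarized (V : votes) (B : block) : Prop :=
  genesis B \/ 2 * n <= 3 * #|voters V B|.

Definition notarized_chain (V : votes) (B : block) : Prop :=
  forall B', ancestor B' B -> notarized V B'.

Definition finalized (V : votes) (F : block) : Prop :=
  exists C B0 B1 B2,
    [/\ notarized_chain V C, ancestor B2 C, parent B0 B1, parent B1 B2 &
        [/\ (epoch B0).+1 = epoch B1, (epoch B1).+1 = epoch B2 & ancestor F B1]].

Definition violates (V : votes) (i : 'I_n) : Prop :=
  exists B1 B2, [/\ V i B1, V i B2 &
    ((B1 <> B2 /\ epoch B1 = epoch B2) \/
     (epoch B1 < epoch B2 /\ depth B2 < depth B1))].

Definition subvotes (V1 V2 : votes) : Prop := forall i B, V1 i B -> V2 i B.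

(* Honest behaviour of validator i: it votes at most once per epoch, and
   when it votes for B (in epoch e_B), B extends one of the longest
   notarized chains in the set of votes it has seen by then; seen votes
   only grow over time. *)
Definition honest (V : votes) (i : 'I_n) : Prop :=
  exists view : nat -> votes,
    [/\ (forall t1 t2, t1 <= t2 -> subvotes (view t1) (view t2)),
        (forall B1 B2, V i B1 -> V i B2 -> epoch B1 = epoch B2 -> B1 = B2) &
        (forall B, V i B -> exists Bp,
           [/\ parent Bp B, notarized_chain (view (epoch B)) Bp &
               forall C, notarized_chain (view (epoch B)) C -> depth C <= depth Bp])].

End Streamlet.

From mathcomp Require Import all_boot.
From mathcomp Require Import zify.
Set Implicit Arguments. Unset Strict Implicit.

(* If F1 is finalized through notarized blocks A0, A1, A2 of consecutive
   epochs e-1, e, e+1 and a conflicting block is finalized, the conflicting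
   notarized chain has a notarized block Z <> A1 at depth |A1|.  Whatever its
   epoch, Z violates a slashing condition together with A0 (epoch <= e-1),
   A1 (epoch e) or A2 (epoch >= e+1), and two quorums of 2n/3 validators
   share at least n/3 validators, each of whom voted for both blocks.
   Conversely, an honest validator votes once per epoch and, as its view only
   grows, always extends a chain at least as long as before. *)

Section Blocks.
Variable P : eqType.
Implicit Types A B F Z : block P.

Lemma epoch_gt0 B : (0 < epoch B) = (0 < depth B).
Proof.
case: B => s; rewrite /epoch /depth /=.
elim/last_ind: s => [|s x _] //; rewrite all_rcons => /andP [x_gt0 _].
by rewrite map_rcons last_rcons size_rcons.
Qed.

Lemma parent_depth A B : parent A B -> depth B = (depth A).+1.
Proof. by case=> x; rewrite /depth => ->; apply: size_rcons. Qed.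

Lemma parent_ancestor A B : parent A B -> ancestor A B.
Proof. by case=> x; rewrite /ancestor => ->; apply: prefix_rcons. Qed.

Lemma ancestor_refl B : ancestor B B.
Proof. exact: prefix_refl. Qed.

Lemma ancestor_trans : transitive (@ancestor P).
Proof. by move=> B A C; apply: prefix_trans. Qed.

Lemma ancestor_total A B F :
  ancestor A F -> ancestor B F -> ancestor A B || ancestor B A.
Proof.
rewrite /ancestor !prefixE => /eqP AF /eqP BF.
case: (leqP (size (val A)) (size (val B))) => [AB | /ltnW BA].
  by rewrite -BF take_takel // AF eqxx.
by rewrite -AF take_takel // BF eqxx orbT.
Qed.

Lemma ancestor_at_depth B k : k <= depth B -> exists2 Z, ancestor Z B & depth Z = k.
Proof.
move=> le_k_B.
have all_take : all (fun x => 0 < x.1) (take k (val B)).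
  by move: (valP B); rewrite -{1}(cat_take_drop k (val B)) all_cat => /andP [].
by exists (exist _ (take k (val B)) all_take); [apply: prefix_take | rewrite /depth /= size_takel].
Qed.

Lemma conflicting_ancestors F1 F2 B1 B2 :
  conflicting F1 F2 -> ancestor F1 B1 -> ancestor F2 B2 -> conflicting B1 B2.
Proof.
move=> /andP [F12 F21] F1B1 F2B2; apply/andP; split; apply/negP => B12.
  by have := ancestor_total (ancestor_trans F1B1 B12) F2B2; rewrite (negbTE F12) (negbTE F21).
by have := ancestor_total F1B1 (ancestor_trans F2B2 B12); rewrite (negbTE F12) (negbTE F21).
Qed.

Definition slashing_pair A B : Prop :=
  (A <> B /\ epoch A = epoch B) \/ (epoch A < epoch B /\ depth B < depth A).

Lemma slashing_pair_deeper A B :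
  depth A < depth B -> epoch B <= epoch A -> slashing_pair B A.
Proof.
move=> lt_AB; rewrite leq_eqVlt => /orP [/eqP eq_AB | lt_BA]; last by right.
by left; split=> // BA; move: lt_AB; rewrite BA ltnn.
Qed.

Lemma slashing_pair_depth_gt0 A B : slashing_pair A B -> (0 < depth A) = (0 < depth B).
Proof.
case=> [[_ e_AB] | [lt_AB lt_BA]]; first by rewrite -!epoch_gt0 e_AB.
rewrite (leq_ltn_trans _ lt_BA) //.
by rewrite -epoch_gt0 (leq_ltn_trans _ lt_AB).
Qed.

Definition finalizing_triple A0 A1 A2 : Prop :=
  [/\ parent A0 A1, parent A1 A2, (epoch A0).+1 = epoch A1 & (epoch A1).+1 = epoch A2].

Lemma finalizing_triple_slashing A0 A1 A2 Z :
  finalizing_triple A0 A1 A2 -> depth Z = depth A1 -> Z <> A1 ->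
  [\/ slashing_pair Z A0, slashing_pair Z A1 | slashing_pair A2 Z].
Proof.
move=> [/parent_depth d1 /parent_depth d2 e1 e2] dZ ZA1.
case: (ltngtP (epoch Z) (epoch A1)) => [lt_ZA1 | lt_A1Z | eq_ZA1].
- by constructor 1; apply: slashing_pair_deeper; lia.
- by constructor 3; apply: slashing_pair_deeper; lia.
- by constructor 2; left.
Qed.

End Blocks.

Section Votes.
Variables (P : eqType) (n : nat).
Implicit Types (A B F Z : block P) (V : votes P n).

Definition quorum V B : Prop := 2 * n <= 3 * #|voters V B|.

Definition slashable_third V : Prop :=
  exists S : {set 'I_n}, n <= 3 * #|S| /\ forall i, i \in S -> violates V i.

Lemma quorum_slashing V A B :
  quorum V A -> quorum V B -> slashing_pair A B -> slashable_third V.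
Proof.
move=> qA qB AB; exists (voters V A :&: voters V B); split.
  have := cardsUI (voters V A) (voters V B).
  have := max_card (voters V A :|: voters V B); rewrite card_ord.
  by rewrite /quorum in qA qB; lia.
by move=> i; rewrite !inE => /andP [iA iB]; exists A, B.
Qed.

Lemma notarized_quorum V B : notarized V B -> 0 < depth B -> quorum V B.
Proof. by case=> // /eqP gB; rewrite /depth gB. Qed.

Lemma notarized_slashing V A B :
  notarized V A -> notarized V B -> 0 < depth A -> slashing_pair A B ->
  slashable_third V.
Proof.
move=> nA nB dA AB; apply: (quorum_slashing _ _ AB); apply: notarized_quorum => //.
by rewrite -(slashing_pair_depth_gt0 AB).
Qed.

Lemma notarized_subvotes V1 V2 B :
  subvotes V1 V2 -> notarized V1 B -> notarized V2 B.
Proof.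
move=> V12 [gB | qB]; [by left | right].
apply: (leq_trans qB); rewrite leq_mul2l subset_leq_card ?orbT //.
by apply/subsetP => i; rewrite !inE; apply: V12.
Qed.

Lemma notarized_chain_subvotes V1 V2 B :
  subvotes V1 V2 -> notarized_chain V1 B -> notarized_chain V2 B.
Proof. by move=> V12 nB A AB; apply: notarized_subvotes V12 (nB A AB). Qed.

Lemma notarized_chain_ancestor V A B :
  notarized_chain V B -> ancestor A B -> notarized_chain V A.
Proof. by move=> nB AB C CA; apply: nB; apply: ancestor_trans CA AB. Qed.

Lemma finalizedP V F :
  finalized V F -> exists A0 A1 A2,
    [/\ finalizing_triple A0 A1 A2, notarized_chain V A2 & ancestor F A1].
Proof.
move=> [C [A0 [A1 [A2 [nC A2C p01 p12 [e01 e12 FA1]]]]]].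
by exists A0, A1, A2; split=> //; apply: notarized_chain_ancestor A2C.
Qed.

Lemma finalizing_rival_slashing V A0 A1 A2 B :
  finalizing_triple A0 A1 A2 -> notarized_chain V A2 -> notarized_chain V B ->
  ~~ ancestor A1 B -> depth A1 <= depth B -> slashable_third V.
Proof.
move=> tA cA2 cB A1B le_A1B; have [p01 p12 _ _] := tA.
have [Z ZB dZ] := ancestor_at_depth le_A1B.
have ZA1 : Z <> A1 by move=> eZ; rewrite -eZ ZB in A1B.
have nZ : notarized V Z by apply: cB.
have dZ_gt0 : 0 < depth Z by rewrite dZ (parent_depth p01).
have nA1 : notarized V A1 by apply: cA2; apply: parent_ancestor.
have nA0 : notarized V A0.
  by apply: cA2; apply: ancestor_trans (parent_ancestor p12); apply: parent_ancestor.
have nA2 : notarized V A2 by apply: cA2; apply: ancestor_refl.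
case: (finalizing_triple_slashing tA dZ ZA1) => [ZA | ZA | AZ].
- exact: notarized_slashing nZ nA0 dZ_gt0 ZA.
- exact: notarized_slashing nZ nA1 dZ_gt0 ZA.
- by apply: notarized_slashing nA2 nZ _ AZ; rewrite (parent_depth p12).
Qed.

Lemma accountable_safety V V1 V2 F1 F2 :
  subvotes V1 V -> subvotes V2 V ->
  finalized V1 F1 -> finalized V2 F2 -> conflicting F1 F2 -> slashable_third V.
Proof.
move=> V1V V2V /finalizedP [A0 [A1 [A2 [tA nA FA]]]].
move=> /finalizedP [B0 [B1 [B2 [tB nB FB]]]] F12.
have /andP [A1B1 B1A1] := conflicting_ancestors F12 FA FB.
have [_ pA12 _ _] := tA; have [_ pB12 _ _] := tB.
move: nA nB => /(notarized_chain_subvotes V1V) nA /(notarized_chain_subvotes V2V) nB.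
case: (leqP (depth A1) (depth B1)) => [le_AB | /ltnW le_BA].
- apply: finalizing_rival_slashing tA nA _ A1B1 le_AB.
  exact: notarized_chain_ancestor nB (parent_ancestor pB12).
- apply: finalizing_rival_slashing tB nB _ B1A1 le_BA.
  exact: notarized_chain_ancestor nA (parent_ancestor pA12).
Qed.

Lemma honest_depth_mono V i B1 B2 :
  honest V i -> V i B1 -> V i B2 -> epoch B1 <= epoch B2 -> depth B1 <= depth B2.
Proof.
move=> [view [view_mono _ longest]] v1 v2 le_e12.
have [Bp1 [p1 nBp1 _]] := longest _ v1.
have [Bp2 [p2 _ Bp2_max]] := longest _ v2.
have := Bp2_max Bp1 (notarized_chain_subvotes (view_mono _ _ le_e12) nBp1).
by rewrite (parent_depth p1) (parent_depth p2).
Qed.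

Lemma honest_no_violation V i : honest V i -> ~ violates V i.
Proof.
move=> hi [B1 [B2 [v1 v2 [[B12 e12] | [lt_e12 lt_d21]]]]].
  by have [view [_ once _]] := hi; apply: B12; apply: once.
by have := honest_depth_mono hi v1 v2 (ltnW lt_e12); rewrite leqNgt lt_d21.
Qed.

End Votes.

Theorem theorem2 (P : eqType) (n : nat) :
  (forall (V V1 V2 : votes P n) (F1 F2 : block P),
     subvotes V1 V -> subvotes V2 V ->
     finalized V1 F1 -> finalized V2 F2 -> conflicting F1 F2 ->
     exists S : {set 'I_n}, n <= 3 * #|S| /\ forall i, i \in S -> violates V i)
  /\
  (forall (V : votes P n) (i : 'I_n), honest V i -> ~ violates V i).
Proof.
split; [exact: accountable_safety | exact: honest_no_violation].
Qed.
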